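(* Let $\Gamma$ be a countable amenable group and $\alpha\colon\Gamma\curvearrowright X$ an action on a compact, Hausdorff, $0$-dimensional space. Then $b\in T(\alpha)$ is an order unit if and only if $\mu(b)>0$ for every $\mu\in\mathcal M(\alpha)$.
   Context: Clopen type semigroup: let $Y = X\times\mathbb N$, and let $\tilde\Gamma=\Gamma\times\mathfrak S$ ($\mathfrak S$ the permutation group of $\mathbb N$) act on $Y$ by $(\gamma,\sigma)(x,n)=(\alpha(\gamma)x,\sigma(n))$. A clopen $A\subseteq Y$ is bounded if $A\cap(X\times\{n\})=\emptyset$ for all large $n$. Bounded clopen $A,B$ are equidecomposable if there are clopen $A_1,\dots,A_n$ and $\tilde\gamma_i\in\tilde\Gamma$ with $A=\bigsqcup_i A_i$, $B=\bigsqcup_i\tilde\gamma_iA_i$. $T(\alpha)$ is the set of classes $[A]$, with $[A]+[B]=[A'\sqcup B']$ for disjoint representatives; $0=[\emptyset]$. $a\le b$ iff $b=a+c$ for some $c$. $b$ is an order unit if for each $a$ there is $k$ with $a\le kb$. A state is a monoid homomorphism $T(\alpha)\to[0,+\infty]$; $\mathcal M(\alpha)$ is the set of states $\mu$ with $\mu([X\times\{0\}])=1$ (these correspond to $\alpha$-invariant Radon probability measures on $X$). *)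

From HB Require Import structures.
From mathcomp Require Import all_boot all_order all_algebra.
From mathcomp Require Import all_classical all_reals topology ereal.
From mathcomp Require Import Rstruct Rstruct_topology.

Set Implicit Arguments.
Unset Strict Implicit.
Unset Printing Implicit Defensive.

Import Order.TTheory GRing.Theory Num.Theory.
Local Open Scope classical_set_scope.

Section Defs.

Variable G : groupType.

Definition countable_group : Prop := exists f : G -> nat, injective f.

(* Amenability of a discrete (countable) group via the Følner condition:
   for every finite K and eps > 0 there is a nonempty finite F with
   |kF Δ F| < eps |F| for every k in K.  Finite subsets are given as
   duplicate-free sequences. *)
Definition left_translate (k : G) (F : seq G) : seq G :=
  map (monoid.mul k) F.

Definition symdiff_card (A B : seq G) : nat :=
  count (fun x => x \notin B) A + count (fun x => x \notin A) B.

Definition amenable_group : Prop :=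
  forall (K : seq G) (eps : Rdefinitions.R), (0 < eps)%R ->
    exists F : seq G,
      [/\ uniq F, (0 < size F)%N &
          forall k, k \in K ->
            ((symdiff_card (left_translate k F) F)%:R < eps * (size F)%:R)%R].

Variable X : topologicalType.

Definition clopen_base : Prop :=
  forall (U : set X) (x : X), open U -> U x ->
    exists V : set X, [/\ clopen V, V x & V `<=` U].

Definition is_action (alpha : G -> X -> X) : Prop :=
  [/\ forall x, alpha monoid.one x = x,
      forall g h x, alpha (monoid.mul g h) x = alpha g (alpha h x) &
      forall g, continuous (alpha g)].

Variable alpha : G -> X -> X.

(* Y = X x N (N discrete); the action of Gamma x Sym(N) on Y. *)
Definition Y := (X * nat)%type.

Definition tact (g : G) (s : nat -> nat) (p : Y) : Y := (alpha g p.1, s p.2).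

Definition bounded (A : set Y) : Prop :=
  exists N : nat, forall x n, A (x, n) -> (n < N)%N.

Definition bclopen (A : set Y) : Prop := clopen A /\ bounded A.

Definition equidec (A B : set Y) : Prop :=
  exists (n : nat) (P : nat -> set Y) (g : nat -> G) (s : nat -> nat -> nat),
    [/\ forall i, (i < n)%N -> clopen (P i) /\ bijective (s i),
        A = \bigcup_(i in `I_n) P i,
        trivIset `I_n P,
        B = \bigcup_(i in `I_n) (tact (g i) (s i) @` P i) &
        trivIset `I_n (fun i => tact (g i) (s i) @` P i)].

Definition cls (A : set Y) : set (set Y) := [set B | bclopen B /\ equidec A B].

(* Elements of the type semigroup T(alpha) are the classes [A]. *)
Definition inT (a : set (set Y)) : Prop := exists A, bclopen A /\ a = cls A.

Definition tzero : set (set Y) := cls set0.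

(* [A] + [B] = [A' |_| B'] for disjoint representatives A' in a, B' in b. *)
Definition tadd (a b : set (set Y)) : set (set Y) :=
  let p := xget (set0, set0)
             [set p : set Y * set Y | [/\ a p.1, b p.2 & p.1 `&` p.2 = set0]] in
  cls (p.1 `|` p.2).

Definition tle (a b : set (set Y)) : Prop := exists c, inT c /\ b = tadd a c.

Definition tmul (k : nat) (b : set (set Y)) : set (set Y) := iter k (tadd b) tzero.

Definition order_unit (b : set (set Y)) : Prop :=
  forall a, inT a -> exists k : nat, tle a (tmul k b).

(* A state: a monoid homomorphism T(alpha) -> [0, +oo]
   (only its values on T(alpha) matter). *)
Definition state (mu : set (set Y) -> \bar Rdefinitions.R) : Prop :=
  [/\ forall a, inT a -> (0 <= mu a)%E,
      mu tzero = 0%E &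
      forall a b, inT a -> inT b -> mu (tadd a b) = (mu a + mu b)%E].

Definition Mstate (mu : set (set Y) -> \bar Rdefinitions.R) : Prop :=
  state mu /\ mu (cls [set p : Y | p.2 = 0%N]) = 1%E.

End Defs.

(* If [b] is an order unit, some multiple of [b] dominates [[X x {0}]], which
   has measure 1, so [mu b > 0].  Conversely, write [b = [B]] and let [V g] be
   the set of points that [g] moves into the projection of [B] to [X].  If
   finitely many [V g_1, ..., V g_m] cover [X], every bounded clopen set cuts
   into clopen pieces, each moved by some [g_i] into its own row of a tower of
   copies of [B], so [b] is an order unit.  Otherwise, by compactness, the orbit
   of some point [x0] avoids the projection of [B].  Counting the points of a
   set on the rows above [h x0], averaging over a Folner set of [h]'s and
   taking the limit along an ultrafilter of Folner sets gives a state in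
   [M(alpha)]: the Folner property makes the limit invariant under
   equidecomposition.  This state vanishes on [b]. *)

From Pilot Require Import Defs.
From HB Require Import structures.
From mathcomp Require Import all_boot all_order all_algebra.
From mathcomp Require Import all_classical all_reals topology ereal.
From mathcomp Require Import Rstruct Rstruct_topology.
From mathcomp Require Import normedtype.
From mathcomp Require Import zify lra.

Set Implicit Arguments.
Unset Strict Implicit.
Unset Printing Implicit Defensive.

Import Order.TTheory GRing.Theory Num.Theory.
Import numFieldNormedType.Exports.
Local Open Scope classical_set_scope.

Section Slices.
Variable X : topologicalType.

Definition slice (A : set (X * nat)) (n : nat) : set X := [set x | A (x, n)].

Lemma open_sliceP (A : set (X * nat)) : open A <-> forall n, open (slice A n).
Proof.
split => [oA n|oS].
  rewrite openE => x Axn; have : nbhs (x, n) A by move: oA; rewrite openE; apply.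
  move=> [[V W] [/= Vx Wn] VWA]; apply: filterS Vx => y Vy.
  by apply: (VWA (y, n)); split => //; exact: nbhs_singleton Wn.
rewrite openE => -[x n] Axn.
have Sx : nbhs x (slice A n) by move: (oS n); rewrite openE; apply.
exists (slice A n, [set n]) => /=; last by move=> [y m] [/= ? ->].
by split => //; apply/principal_filterP.
Qed.

Lemma closed_sliceP (A : set (X * nat)) :
  closed A <-> forall n, closed (slice A n).
Proof.
rewrite -openC open_sliceP; split => h n; have := h n; by rewrite -openC.
Qed.

Lemma clopen_sliceP (A : set (X * nat)) :
  clopen A <-> forall n, clopen (slice A n).
Proof.
split => [[/open_sliceP oA /closed_sliceP cA] n|h]; first by split.
by split; [apply/open_sliceP => n|apply/closed_sliceP => n]; case: (h n).
Qed.

End Slices.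

Lemma clopen_bigcup_ord (T : topologicalType) n (F : nat -> set T) :
  (forall i, (i < n)%N -> clopen (F i)) -> clopen (\bigcup_(i in `I_n) F i).
Proof.
move=> cF; split; first by apply: bigcup_open => i /cF [].
by apply: closed_bigcup => [|i /cF []]; first exact: finite_II.
Qed.

Lemma ltn_divmod n m t : (t < n * m)%N -> (t %/ m < n)%N /\ (t %% m < m)%N.
Proof.
move=> lt; have m0 : (0 < m)%N by case: m lt => //; rewrite muln0.
by rewrite ltn_divLR // ltn_mod.
Qed.

Lemma divmod_pair n m i j : (i < n)%N -> (j < m)%N ->
  [/\ (i * m + j < n * m)%N, ((i * m + j) %/ m = i)%N & ((i * m + j) %% m = j)%N].
Proof.
move=> hi hj; split; first by nia.
  by rewrite divnMDl ?divn_small ?addn0 //; lia.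
by rewrite modnMDl modn_small.
Qed.

Definition fcat (A : Type) (n : nat) (f g : nat -> A) (t : nat) : A :=
  if (t < n)%N then f t else g (t - n)%N.

Section IndexedUnions.
Variable T : Type.

Lemma bigcup_swap I J (P : set I) (Q : set J) (F : I -> J -> set T) :
  \bigcup_(i in P) \bigcup_(j in Q) F i j = \bigcup_(j in Q) \bigcup_(i in P) F i j.
Proof.
by apply/seteqP; split => y [i Pi [j Qj Fy]]; exists j => //; exists i.
Qed.

Lemma bigcup_ord_divmod n m (F : nat -> nat -> set T) :
  \bigcup_(t in `I_(n * m)) F (t %/ m)%N (t %% m)%N =
  \bigcup_(i in `I_n) \bigcup_(j in `I_m) F i j.
Proof.
apply/seteqP; split => [y [t /= /ltn_divmod [hi hj] Fy]|y [i /= hi [j /= hj Fy]]].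
  by exists (t %/ m)%N => //; exists (t %% m)%N.
have [ht e1 e2] := divmod_pair hi hj.
by exists (i * m + j)%N => //=; rewrite e1 e2.
Qed.

Lemma trivIset_ord_divmod n m (F : nat -> nat -> set T) :
  (forall i i' j j', (i < n)%N -> (i' < n)%N -> (j < m)%N -> (j' < m)%N ->
     F i j `&` F i' j' !=set0 -> i = i' /\ j = j') ->
  trivIset `I_(n * m) (fun t => F (t %/ m)%N (t %% m)%N).
Proof.
move=> hF t t' /ltn_divmod [hi hj] /ltn_divmod [hi' hj'].
move=> /(hF _ _ _ _ hi hi' hj hj') [e1 e2].
by rewrite (divn_eq t m) (divn_eq t' m) e1 e2.
Qed.

Lemma bigcup_fcat n m (P Q : nat -> set T) :
  \bigcup_(t in `I_(n + m)) fcat n P Q t =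
  \bigcup_(i in `I_n) P i `|` \bigcup_(j in `I_m) Q j.
Proof.
rewrite /fcat; apply/seteqP; split.
  move=> y [t /= ht]; case: ifPn => htn Fy; first by left; exists t.
  by right; exists (t - n)%N => //=; lia.
move=> y [[i /= hi Py]|[j /= hj Qy]]; first by exists i => /=; [lia|rewrite hi].
exists (j + n)%N => /=; first lia.
by rewrite ifN ?addnK //; lia.
Qed.

Lemma trivIset_fcat n m (P Q : nat -> set T) :
  trivIset `I_n P -> trivIset `I_m Q ->
  \bigcup_(i in `I_n) P i `&` \bigcup_(j in `I_m) Q j = set0 ->
  trivIset `I_(n + m) (fcat n P Q).
Proof.
rewrite /fcat => tP tQ dPQ t t' /= ht ht' [y []].
case: ifPn => h1; case: ifPn => h2 => Py Py'.
- by apply: tP => //; exists y.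
- suff : set0 y by [].
  by rewrite -dPQ; split; [exists t|exists (t' - n)%N => //=; lia].
- suff : set0 y by [].
  by rewrite -dPQ; split; [exists t'|exists (t - n)%N => //=; lia].
- have : (t - n = t' - n)%N by apply: tQ => /=; [lia|lia|exists y].
  lia.
Qed.

End IndexedUnions.

Lemma image_setI_preimage (T U : Type) (f : T -> U) (A : set T) (B : set U) :
  f @` (A `&` f @^-1` B) = f @` A `&` B.
Proof.
apply/seteqP; split => [_ [x [Ax Bfx] <-]|_ [[x Ax <-] Bfx]]; last by exists x.
by split => //; exists x.
Qed.

(** * Equidecomposability *)

Section Equidecomposability.
Variables (G : groupType) (X : topologicalType) (alpha : G -> X -> X).
Hypothesis hact : is_action alpha.

Local Notation tact := (tact alpha).
Local Notation equidec := (equidec alpha).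
Local Notation gm := (@monoid.mul G).
Local Notation gi := (@monoid.inv G).
Local Notation g1 := (@monoid.one G).

Lemma act1 x : alpha g1 x = x. Proof. by case: hact. Qed.

Lemma actM g h x : alpha (gm g h) x = alpha g (alpha h x).
Proof. by case: hact. Qed.

Lemma actK g : cancel (alpha g) (alpha (gi g)).
Proof. by move=> x; rewrite -actM monoid.mulVg act1. Qed.

Lemma actVK g : cancel (alpha (gi g)) (alpha g).
Proof. by move=> x; rewrite -actM monoid.mulgV act1. Qed.

Lemma clopen_preimage_act g (S : set X) : clopen S -> clopen (alpha g @^-1` S).
Proof.
have /continuousP hc : continuous (alpha g) by case: hact.
move=> [oS cS]; split; first exact: hc.
by rewrite -openC preimage_setC; apply: hc; rewrite openC.
Qed.

Lemma open_translate_hits (B : set (Y X)) g :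
  open B -> open [set x | exists n, B (alpha g x, n)].
Proof.
move=> /open_sliceP oB.
have -> : [set x | exists n, B (alpha g x, n)] =
    alpha g @^-1` \bigcup_(n in setT) slice B n.
  by apply/seteqP; split => x [n] => [Bn|_ Bn]; exists n.
have /continuousP cg : continuous (alpha g) by case: hact.
by apply: cg; exact: bigcup_open.
Qed.

Lemma clopen_preimage_tact g s (Q : set (Y X)) :
  clopen Q -> clopen (tact g s @^-1` Q).
Proof.
move=> /clopen_sliceP cQ; apply/clopen_sliceP => n.
exact: clopen_preimage_act (cQ (s n)).
Qed.

Lemma image_tactE g s s' (P : set (Y X)) : cancel s s' -> cancel s' s ->
  tact g s @` P = tact (gi g) s' @^-1` P.
Proof.
move=> ss' s's; apply/seteqP; split.
  by move=> _ [[x n] Pxn <-]; rewrite /preimage /tact /= actK ss'.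
move=> [y m] Py; exists (alpha (gi g) y, s' m) => //.
by rewrite /tact /= actVK s's.
Qed.

Lemma clopen_image_tact g s (P : set (Y X)) :
  bijective s -> clopen P -> clopen (tact g s @` P).
Proof.
by case=> s' ss' s's cP; rewrite (image_tactE _ _ ss' s's); exact: clopen_preimage_tact.
Qed.

Lemma tact_comp g h s r : tact h r \o tact g s = tact (gm h g) (r \o s).
Proof. by apply/funext => -[x n]; rewrite /tact /= actM. Qed.

Lemma tact_inj g s : injective s -> injective (tact g s).
Proof.
move=> si [x n] [x' n'] [e1 /si ->].
by rewrite -(actK g x) e1 actK.
Qed.

Lemma image_tact1 (P : set (Y X)) : tact g1 id @` P = P.
Proof.
rewrite -[RHS]image_id; congr image; apply/funext => -[x n].
by rewrite /tact /= act1.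
Qed.

Lemma equidec_image g s (P : set (Y X)) :
  clopen P -> bijective s -> equidec P (tact g s @` P).
Proof.
move=> cP bs; exists 1%N, (fun=> P), (fun=> g), (fun=> s).
have single (Q : set (Y X)) : Q = \bigcup_(i in `I_1) Q.
  by apply/seteqP; split => [y Qy|y [i _ //]]; exists 0%N.
have triv (Q : set (Y X)) : trivIset `I_1 (fun=> Q) by move=> i j /= hi hj _; lia.
by split; [move=> i _; split|exact: single|exact: triv|exact: single|exact: triv].
Qed.

Lemma equidec_refl A : clopen A -> equidec A A.
Proof.
move=> cA; rewrite -{2}(image_tact1 A); apply: equidec_image => //.
by exists id.
Qed.

Lemma equidec_sym A B : equidec A B -> equidec B A.
Proof.
move=> [n [P [g [s [hP AP tP BP tQ]]]]].
have /choice [s' hs'] : forall i, exists t : nat -> nat, (i < n)%N ->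
    cancel (s i) t /\ cancel t (s i).
  move=> i; case: (ltnP i n) => hi; last by exists id.
  by have [_ [t h1 h2]] := hP i hi; exists t.
have imK i : (i < n)%N -> tact (gi (g i)) (s' i) @` (tact (g i) (s i) @` P i) = P i.
  move=> hi; rewrite image_comp tact_comp monoid.mulVg.
  rewrite (_ : s' i \o s i = id) ?image_tact1 //.
  by apply/funext => k; rewrite /= (hs' i hi).1.
exists n, (fun i => tact (g i) (s i) @` P i), (fun i => gi (g i)), s'; split => //.
- move=> i hi; have [cP _] := hP i hi; have [ss' s's] := hs' i hi.
  by split; [apply: clopen_image_tact (hP i hi).2 cP|exists (s i)].
- by rewrite AP; apply: eq_bigcupr => i /imK.
- by move=> i j hi hj; rewrite !imK //; exact: tP.
Qed.

Lemma equidec_trans A B C : equidec A B -> equidec B C -> equidec A C.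
Proof.
move=> [n [P [g [s [hP AP tP BP tPi]]]]] [m [Q [h [r [hQ BQ tQ CQ tQi]]]]].
pose R i j := P i `&` tact (g i) (s i) @^-1` Q j.
pose R' i j := tact (gm (h j) (g i)) (r j \o s i) @` R i j.
have R'E i j : R' i j = tact (h j) (r j) @` (tact (g i) (s i) @` P i `&` Q j).
  by rewrite /R' -tact_comp -image_comp image_setI_preimage.
exists (n * m)%N, (fun t => R (t %/ m) (t %% m)),
  (fun t => gm (h (t %% m)) (g (t %/ m))), (fun t => r (t %% m) \o s (t %/ m)).
split.
- move=> t /ltn_divmod [hi hj]; have [cP bs] := hP _ hi; have [cQ br] := hQ _ hj.
  split; last exact: bij_comp.
  by apply: clopenI => //; exact: clopen_preimage_tact.
- rewrite (bigcup_ord_divmod n m R) AP; apply: eq_bigcupr => i hi.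
  rewrite -setI_bigcupr -preimage_bigcup -BQ setIidl // => y Py.
  by rewrite BP; exists i => //; exists y.
- apply: (@trivIset_ord_divmod _ n m R) => i i' j j' hi hi' hj hj'.
  move=> [y [[Py Qy] [Py' Qy']]].
  have ei : i = i' by apply: tP => //; exists y.
  by subst i'; split => //; apply: tQ => //; exists (tact (g i) (s i) y).
- rewrite (bigcup_ord_divmod n m R') CQ bigcup_swap; apply: eq_bigcupr => j hj.
  under eq_bigcupr do rewrite R'E.
  rewrite -image_bigcup -setI_bigcupl -BP setIidr // => y Qy.
  by rewrite BQ; exists j.
- apply: (@trivIset_ord_divmod _ n m R') => i i' j j' hi hi' hj hj'.
  rewrite !R'E => -[z [[w [[y Py ey] Qw] ez] [w' [[y' Py' ey'] Qw'] ez']]].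
  have ej : j = j'.
    by apply: tQi => //; exists z; split; [exists w|exists w'].
  subst j'; rewrite -ez' in ez; have eww := tact_inj (bij_inj (hQ j hj).2) ez.
  split => //; apply: tPi => //; exists w.
  by split; [exists y|rewrite eww; exists y'].
Qed.

Lemma equidec_setU A A' C C' : equidec A A' -> equidec C C' ->
  A `&` C = set0 -> A' `&` C' = set0 -> equidec (A `|` C) (A' `|` C').
Proof.
move=> [n [P [g [s [hP AP tP BP tPi]]]]] [m [Q [h [r [hQ BQ tQ CQ tQi]]]]] dAC dAC'.
exists (n + m)%N, (fcat n P Q), (fcat n g h), (fcat n s r).
have -> : (fun t => tact (fcat n g h t) (fcat n s r t) @` fcat n P Q t) =
    fcat n (fun i => tact (g i) (s i) @` P i) (fun j => tact (h j) (r j) @` Q j).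
  by apply/funext => t; rewrite /fcat; case: ifP.
split.
- move=> t ht; rewrite /fcat; case: ifPn => htn; first exact: hP.
  by apply: hQ; lia.
- by rewrite bigcup_fcat -AP -BQ.
- by apply: trivIset_fcat; rewrite // -AP -BQ.
- by rewrite bigcup_fcat -BP -CQ.
- by apply: trivIset_fcat; rewrite // -BP -CQ.
Qed.

Lemma equidec_clopen_r A B : equidec A B -> clopen B.
Proof.
move=> [n [P [g [s [hP _ _ -> _]]]]]; apply: clopen_bigcup_ord => i /hP [cP bs].
exact: clopen_image_tact.
Qed.

End Equidecomposability.

Definition swap_blocks (M N n : nat) : nat :=
  if (n < M)%N then (n + N)%N else if (n < M + N)%N then (n - M)%N else n.

Lemma swap_blocksK M N : cancel (swap_blocks M N) (swap_blocks N M).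
Proof.
move=> n; rewrite /swap_blocks.
case: (ltnP n M) => h1; first by rewrite ifN ?ifT ?addnK //; lia.
case: (ltnP n (M + N)) => h2; first by rewrite ifT //; lia.
by rewrite ifN ?ifN //; lia.
Qed.

Lemma swap_blocks_lt M N n : (n < M)%N -> swap_blocks M N n = (n + N)%N.
Proof. by move=> hn; rewrite /swap_blocks hn. Qed.

Lemma swap_blocks_bij M N : bijective (swap_blocks M N).
Proof. by exists (swap_blocks N M); exact: swap_blocksK. Qed.

Definition transp (a b n : nat) : nat :=
  if n == a then b else if n == b then a else n.

Lemma transpK a b : involutive (transp a b).
Proof.
move=> n; rewrite /transp.
case: (eqVneq n a) => [->|na]; first by rewrite eqxx; case: eqVneq.
case: (eqVneq n b) => [->|nb]; first by rewrite eqxx.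
by rewrite (negPf na) (negPf nb).
Qed.

Lemma transp_l a b : transp a b a = b.
Proof. by rewrite /transp eqxx. Qed.

Definition bounded_by (X : topologicalType) (N : nat) (A : set (Y X)) : Prop :=
  forall x n, A (x, n) -> (n < N)%N.

Lemma bounded_byW (X : topologicalType) N N' (A : set (Y X)) :
  (N <= N')%N -> bounded_by N A -> bounded_by N' A.
Proof. by move=> NN' hA x n /hA; lia. Qed.

(** * Order units of the type semigroup *)

Section TypeSemigroup.
Variables (G : groupType) (X : topologicalType) (alpha : G -> X -> X).
Hypothesis hact : is_action alpha.

Local Notation tact := (tact alpha).
Local Notation equidec := (equidec alpha).
Local Notation cls := (cls alpha).
Local Notation tadd := (tadd alpha).
Local Notation inT := (inT alpha).
Local Notation tzero := (tzero alpha).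
Local Notation tmul := (tmul alpha).
Local Notation tle := (tle alpha).
Local Notation g1 := (@monoid.one G).

Lemma cls_eq A B : equidec A B -> cls A = cls B.
Proof.
move=> AB; apply/seteqP; split => C [bC e]; split => //.
  exact: equidec_trans (equidec_sym hact AB) e.
exact: equidec_trans AB e.
Qed.

Lemma cls_self (A : set (Y X)) : bclopen A -> cls A A.
Proof. by move=> [cA bA]; split => //; exact: equidec_refl. Qed.

Lemma bclopenU (A C : set (Y X)) : bclopen A -> bclopen C -> bclopen (A `|` C).
Proof.
move=> [cA [N1 hA]] [cC [N2 hC]]; split; first exact: clopenU.
by exists (N1 + N2)%N => x n [/hA|/hC]; lia.
Qed.

Lemma bclopen0 : bclopen (set0 : set (Y X)).
Proof. by split; [exact: clopen0|exists 0%N]. Qed.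

Lemma disjoint_representative (A C : set (Y X)) : bclopen A -> bclopen C ->
  exists C', [/\ bclopen C', equidec C C' & A `&` C' = set0].
Proof.
move=> [cA [N1 hA]] [cC [N2 hC]].
exists (tact g1 (swap_blocks N2 N1) @` C); split.
- split; first exact: clopen_image_tact (swap_blocks_bij _ _) cC.
  exists (N2 + N1)%N => x q [[y n] /hC hn [_ <-]]; rewrite swap_blocks_lt //; lia.
- exact: equidec_image (swap_blocks_bij _ _).
- apply/seteqP; split => // -[x q] [/hA hq [[y n] /hC hn [_ e]]].
  by move: e hq; rewrite swap_blocks_lt // => <-; lia.
Qed.

Lemma tadd_cls (A C : set (Y X)) : bclopen A -> bclopen C -> A `&` C = set0 ->
  tadd (cls A) (cls C) = cls (A `|` C).
Proof.
move=> bA bC dAC; rewrite /Defs.tadd.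
set P := [set q : set (Y X) * set (Y X) | _].
have : P (xget (set0, set0) P).
  by apply: (@xgetI _ _ _ (A, C)); split => //=; exact: cls_self.
move: (xget _ P) => -[A' C'] [[_ eA] [_ eC] /= dAC'].
by apply/esym/cls_eq; exact: equidec_setU.
Qed.

Lemma tadd_representatives a c : inT a -> inT c ->
  exists A C, [/\ bclopen A, bclopen C, A `&` C = set0 &
     [/\ a = cls A, c = cls C & tadd a c = cls (A `|` C)]].
Proof.
move=> [A [bA ->]] [C [bC ->]].
have [C' [bC' e d]] := disjoint_representative bA bC.
exists A, C'; rewrite (cls_eq e); split => //; split => //.
exact: tadd_cls.
Qed.

Lemma inT_tadd a c : inT a -> inT c -> inT (tadd a c).
Proof.
move=> ha hc; have [A [C [bA bC _ [_ _ ->]]]] := tadd_representatives ha hc.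
by exists (A `|` C); split => //; exact: bclopenU.
Qed.

Lemma inT_tzero : inT tzero.
Proof. by exists set0; split => //; exact: bclopen0. Qed.

Lemma inT_tmul k b : inT b -> inT (tmul k b).
Proof. by move=> hb; elim: k => [|k IH] /=; [exact: inT_tzero|exact: inT_tadd]. Qed.

Definition first_row : set (Y X) := [set p | p.2 = 0%N].

Lemma bclopen_first_row : bclopen first_row.
Proof.
split; last by exists 1%N => x n; rewrite /first_row /= => ->.
apply/clopen_sliceP => -[|n].
  have -> : slice first_row 0 = setT by apply/seteqP; split.
  exact: clopenT.
have -> : slice first_row n.+1 = set0 by apply/seteqP; split => // x.
exact: clopen0.
Qed.

Lemma order_unit_Mstate_gt0 b mu :
  inT b -> order_unit alpha b -> Mstate alpha mu -> (0 < mu b)%E.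
Proof.
move=> hb ou [[mu_ge0 mu0 muD] mu_first_row].
have first_rowT : inT (cls first_row).
  by exists first_row; split => //; exact: bclopen_first_row.
have [k [c [hc e]]] := ou _ first_rowT.
rewrite lt_neqAle mu_ge0 // andbT; apply/eqP => mub0.
have mu_tmul j : mu (tmul j b) = 0%E.
  elim: j => [|j IH] /=; first exact: mu0.
  by rewrite muD //; [rewrite -mub0 IH adde0|exact: inT_tmul].
have := mu_tmul k; rewrite e muD // mu_first_row => c0.
have : (1 <= 1 + mu c)%E by apply: leeDl; exact: mu_ge0.
by rewrite c0 leNgt lte01.
Qed.

Definition tower (B : set (Y X)) (N k : nat) : set (Y X) :=
  [set p | (p.2 < k * N)%N /\ B (p.1, p.2 %% N)%N].

Lemma bclopen_tower (B : set (Y X)) N k : bclopen B -> bclopen (tower B N k).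
Proof.
move=> [/clopen_sliceP cB _]; split; last by exists (k * N)%N => x n [].
apply/clopen_sliceP => q.
have -> : slice (tower B N k) q = if (q < k * N)%N then slice B (q %% N)%N else set0.
  apply/seteqP; split => x; rewrite /slice /tower /=; first by move=> [-> ?].
  by case: ifP => // ->.
by case: ifP => _; [exact: cB|exact: clopen0].
Qed.

Section Tower.
Variables (B : set (Y X)) (N k : nat).
Hypotheses (bB : bclopen B) (hN : bounded_by N B).

Let shifted := tact g1 (swap_blocks (k * N) N) @` tower B N k.

Lemma towerS : tower B N k.+1 = B `|` shifted.
Proof.
have shiftE x n : (n < k * N)%N ->
    tact g1 (swap_blocks (k * N) N) (x, n) = (x, n + N)%N.
  by move=> hn; rewrite /tact swap_blocks_lt //= act1.
apply/seteqP; split => [[x q] [/= hq Bq]|[x q] [Bxq|[[y n] [/= hn Byn]]]].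
- case: (ltnP q N) => hqN; first by left; rewrite -(modn_small hqN).
  have hqN' : (q - N < k * N)%N by rewrite mulSn in hq; lia.
  right; exists (x, q - N)%N; last by rewrite shiftE // subnK.
  by split => //=; rewrite -(modnDr (q - N) N) subnK.
- have hq := hN Bxq; split => /=; first by rewrite mulSn; lia.
  by rewrite modn_small.
- rewrite shiftE // => -[<- <-]; split => /=; first by rewrite mulSn; lia.
  by rewrite modnDr.
Qed.

Lemma bclopen_shifted : bclopen shifted.
Proof.
split; first by apply: clopen_image_tact (swap_blocks_bij _ _) (bclopen_tower _ _ bB).1.
exists (k.+1 * N)%N => x q [[y n] [/= hn _] [_ <-]].
by rewrite swap_blocks_lt //; lia.
Qed.

Lemma tower_shifted_disjoint : B `&` shifted = set0.
Proof.
apply/seteqP; split => // -[x q] [/hN hq [[y n] [/= hn _] [_ e]]].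
by move: e; rewrite swap_blocks_lt // => e; lia.
Qed.

End Tower.

Lemma tmul_tower (B : set (Y X)) N k : bclopen B -> bounded_by N B ->
  tmul k (cls B) = cls (tower B N k).
Proof.
move=> bB hN; elim: k => [|k IH] /=.
  by congr cls; apply/seteqP; split => // -[x n] []; rewrite mul0n.
rewrite IH (cls_eq (equidec_image alpha g1 (bclopen_tower _ _ bB).1
  (swap_blocks_bij (k * N) N))).
rewrite (tadd_cls bB (bclopen_shifted N k bB) (tower_shifted_disjoint k hN)).
by rewrite -towerS.
Qed.

Lemma tle_equidec_subset (A A' D : set (Y X)) : bclopen A -> bclopen D ->
  equidec A A' -> A' `<=` D -> tle (cls A) (cls D).
Proof.
move=> bA [cD [N hD]] AA' A'D.
have cA' := equidec_clopen_r hact AA'.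
have bA' : bclopen A' by split => //; exists N => x n /A'D /hD.
have bDA' : bclopen (D `\` A').
  by split; [apply: clopenI => //; exact: clopenC|exists N => x n [/hD]].
exists (cls (D `\` A')); split; first by exists (D `\` A').
rewrite (cls_eq AA') tadd_cls ?setDUK //.
by apply/seteqP; split => // y [? []].
Qed.

Section FiniteCover.
Variables (B : set (Y X)) (N : nat) (l : seq G).
Hypotheses (bB : bclopen B) (hN : bounded_by N B).
Hypothesis cover :
  forall x, exists2 i, (i < size l)%N & exists n, B (alpha (nth g1 l i) x, n).

Let J := (size l * N)%N.

(* The code [c] stands for the translate [nth g1 l (c %/ N)] and the row [c %% N]. *)
Let hit (c : nat) : set X := [set x | B (alpha (nth g1 l (c %/ N)) x, c %% N)%N].
Let first_hit (c : nat) : set X := hit c `&` ~` \bigcup_(c' in `I_c) hit c'.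

Lemma clopen_first_hit c : clopen (first_hit c).
Proof.
have clopen_hit c' : clopen (hit c').
  exact: (clopen_preimage_act hact _ ((clopen_sliceP B).1 bB.1 _)).
apply: clopenI => //; apply: (clopenC set0).
by apply: clopen_bigcup_ord => c' _.
Qed.

Lemma first_hit_inj c c' x : first_hit c x -> first_hit c' x -> c = c'.
Proof.
move=> [hc nc] [hc' nc']; case: (ltngtP c c') => // h.
  by case: nc'; exists c.
by case: nc; exists c'.
Qed.

Lemma first_hit_cover x : exists2 c, (c < J)%N & first_hit c x.
Proof.
have [i hi [n Bn]] := cover x; have hn := hN Bn.
have [hc e1 e2] := divmod_pair hi hn.
have ex : exists c, (c < J)%N && `[< hit c x >].
  by exists (i * N + n)%N; apply/andP; split => //; apply/asboolP; rewrite /hit e1 e2.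
case: (ex_minnP ex) => c /andP [hcJ /asboolP hitc] cmin.
exists c => //; split => // -[c' /= hc' hitc'].
have := cmin c'; rewrite (ltn_trans hc' hcJ) /=.
have -> : `[< hit c' x >] = true by exact/asboolP.
by move=> /(_ isT); lia.
Qed.

Variables (A : set (Y X)) (M : nat).
Hypotheses (bA : bclopen A) (hM : bounded_by M A).

(* The piece [t = q * J + c] consists of the points of row [q] of [A] whose
   first hit is [c]; it is moved by that hit to row [t]. *)
Let piece (t : nat) : set (Y X) :=
  [set p | A p /\ p.2 = (t %/ J)%N /\ first_hit (t %% J)%N p.1].
Let move_piece (t : nat) := tact (nth g1 l ((t %% J) %/ N)) (transp (t %/ J) t).

Lemma equidec_pieces :
  equidec A (\bigcup_(t in `I_(M * J)) move_piece t @` piece t).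
Proof.
exists (M * J)%N, piece, (fun t => nth g1 l ((t %% J) %/ N)),
  (fun t => transp (t %/ J) t).
split => //.
- move=> t _; split; last exact/inv_bij/transpK.
  apply/clopen_sliceP => q.
  have -> : slice (piece t) q =
      if q == (t %/ J)%N then slice A q `&` first_hit (t %% J)%N else set0.
    apply/seteqP; split => x; rewrite /slice /piece /=.
      by move=> [Ax [e Ex]]; subst q; rewrite eqxx; split.
    by case: eqP => // -> [].
  case: ifP => _; last exact: clopen0.
  by apply: clopenI; [move/clopen_sliceP: bA.1; apply|exact: clopen_first_hit].
- apply/seteqP; split; last by move=> y [t _ [Ay _]].
  move=> [x q] Axq; have [c hc Ec] := first_hit_cover x.
  have [ht e1 e2] := divmod_pair (hM Axq) hc.
  by exists (q * J + c)%N => //; rewrite /piece /= e1 e2.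
- move=> t t' ht ht' [[x q] [[_ [/= e1 E1]] [_ [/= e2 E2]]]].
  by rewrite (divn_eq t J) (divn_eq t' J) -e1 -e2 (first_hit_inj E1 E2).
- move=> t t' ht ht' [z [[[x q] [_ [/= e1 _]] <-] [[x' q'] [_ [/= e2 _]] e]]].
  by move: e; rewrite /tact /= e1 e2 !transp_l => -[].
Qed.

Lemma moved_pieces_sub :
  \bigcup_(t in `I_(M * J)) move_piece t @` piece t `<=` tower B N (M * size l).
Proof.
move=> _ [t /= ht [[x q] [_ [/= e1 [hitx _]]] <-]].
rewrite /move_piece /tact /= e1 transp_l; split => /=; first by rewrite /J mulnA in ht.
by move: hitx; rewrite /hit (modn_dvdm t (dvdn_mull (size l) (dvdnn N))).
Qed.

Lemma equidec_into_tower :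
  exists2 A', equidec A A' & A' `<=` tower B N (M * size l).
Proof.
exists (\bigcup_(t in `I_(M * J)) move_piece t @` piece t).
  exact: equidec_pieces.
exact: moved_pieces_sub.
Qed.

End FiniteCover.

Lemma order_unit_of_cover (B : set (Y X)) N (l : seq G) :
  bclopen B -> bounded_by N B ->
  (forall x, exists2 i, (i < size l)%N & exists n, B (alpha (nth g1 l i) x, n)) ->
  order_unit alpha (cls B).
Proof.
move=> bB hN cover _ [A [bA ->]]; have [M hM] := bA.2.
have [A' AA' A'_sub] := equidec_into_tower bB hN cover bA hM.
exists (M * size l)%N; rewrite (tmul_tower _ bB hN).
exact: tle_equidec_subset bA (bclopen_tower _ _ bB) AA' A'_sub.
Qed.

End TypeSemigroup.

(** * An invariant state from a Folner ultrafilter *)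

Local Notation R := Rdefinitions.R.

Lemma sum_le_count (T : Type) (s : seq T) (P : pred T) (phi : T -> nat) N :
  (forall h, (phi h <= N)%N) -> (\sum_(h <- s | P h) phi h <= N * count P s)%N.
Proof.
move=> hphi; elim: s => [|h s IH]; first by rewrite big_nil.
by rewrite big_cons /=; have := hphi h; case: (P h) => /=; lia.
Qed.

Section Folner.
Variable G : groupType.
Local Notation gm := (@monoid.mul G).

Lemma sum_translate_symdiff (phi : G -> nat) N k (F : seq G) : uniq F ->
  (forall h, (phi h <= N)%N) ->
  (`| ((\sum_(h <- map (gm k) F) phi h)%:R - (\sum_(h <- F) phi h)%:R : R) |
     <= N%:R * (symdiff_card (left_translate k F) F)%:R)%R.
Proof.
move=> uF hphi; rewrite /symdiff_card /left_translate.
set kF := map (gm k) F.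
have ukF : uniq kF by rewrite map_inj_uniq //; exact: monoid.mulgI.
rewrite (@bigID _ _ _ _ kF (fun h => h \in F)).
rewrite (@bigID _ _ _ _ F (fun h => h \in kF)) /=.
have -> : (\sum_(h <- kF | h \in F) phi h = \sum_(h <- F | h \in kF) phi h)%N.
  rewrite -[LHS]big_filter -[RHS]big_filter; apply: perm_big.
  by apply: uniq_perm; rewrite ?filter_uniq // => h; rewrite !mem_filter andbC.
have := sum_le_count kF (fun h => h \notin F) hphi.
have := sum_le_count F (fun h => h \notin kF) hphi.
set a := (\sum_(h <- F | h \in kF) phi h)%N.
set b := (\sum_(h <- kF | h \notin F) phi h)%N.
set c := (\sum_(h <- F | h \notin kF) phi h)%N.
rewrite -!(ler_nat R) !natrM !natrD => hc hb.
rewrite opprD addrACA subrr add0r.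
have b0 : (0 <= b%:R :> R)%R by rewrite ler0n.
have c0 : (0 <= c%:R :> R)%R by rewrite ler0n.
by rewrite ler_norml; apply/andP; split; lra.
Qed.

Definition folner (K : seq G) (e : R) : set (seq G) :=
  [set F | [/\ uniq F, (0 < size F)%N & forall k, k \in K ->
     ((symdiff_card (left_translate k F) F)%:R < e * (size F)%:R)%R]].

Lemma folner_ultrafilter : amenable_group G ->
  exists U : set_system (seq G),
    UltraFilter U /\ forall K e, (0 < e)%R -> U (folner K e).
Proof.
move=> amen; pose D := [set Ke : seq G * R | (0 < Ke.2)%R].
pose FolF := filter_from D (fun Ke => folner Ke.1 Ke.2).
have FF : Filter FolF.
  apply: filter_from_filter; first by exists ([::], 1%R) => /=; exact: ltr01.
  move=> [K1 e1] [K2 e2] /= h1 h2; exists (K1 ++ K2, Num.min e1 e2).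
    by rewrite /D /= lt_min h1 h2.
  move=> F [uF sF hK] /=; split; split => // k hk.
    apply: (lt_le_trans (hK k _)); first by rewrite mem_cat hk.
    by rewrite ler_wpM2r ?ler0n // ge_min lexx.
  apply: (lt_le_trans (hK k _)); first by rewrite mem_cat hk orbT.
  by rewrite ler_wpM2r ?ler0n // ge_min lexx orbT.
have PF : ProperFilter FolF.
  apply: filter_from_proper => -[K e] /= e0.
  by have [F hF] := amen K e e0; exists F.
have [U [UU sU]] := ultraFilterLemma PF.
by exists U; split => // K e e0; apply: sU; exists (K, e).
Qed.

End Folner.

Section UltraLimits.
Local Open Scope ring_scope.

Lemma ultra_cvg_bounded (T : Type) (U : set_system T) (u : T -> R) (M : R) :
  UltraFilter U -> (forall t, 0 <= u t <= M) -> u @ U --> lim (u @ U).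
Proof.
move=> UU hu; have hF : U (u @^-1` [set` `[0, M]]).
  by apply: filterS (@filterT _ U _) => t _ /=; rewrite in_itv /=; exact: hu.
have [p [_ cp]] := @segment_compact R 0 M (u @ U) _ hF.
suff up : u @ U --> p by rewrite (cvg_lim (@Rhausdorff R) up).
move=> B Bp; case: (in_ultra_setVsetC (u @^-1` B) UU) => // hC.
by have [t [/= nt Bt]] := cp (~` B) B hC Bp.
Qed.

Lemma cvg_eq_near (T : Type) (U : set_system T) (u v : T -> R) (a b : R) :
  ProperFilter U -> u @ U --> a -> v @ U --> b ->
  (forall e, 0 < e -> U [set t | `|u t - v t| < e]) -> a = b.
Proof.
move=> PU ua vb near_uv; apply/eqP; rewrite -subr_eq0; apply/eqP.
have uv0 : (u - v) @ U --> (0 : R).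
  apply/(@cvgrPdist_lt _ R^o) => e e0; apply: filterS (near_uv e e0) => t /=.
  by rewrite sub0r normrN.
have uvab := @cvgB _ R^o _ _ _ _ _ _ _ ua vb.
exact: (cvg_unique _ (uvab _) uv0).
Qed.

End UltraLimits.

Section RowCount.
Variables (G : groupType) (X : topologicalType) (alpha : G -> X -> X).
Hypothesis hact : is_action alpha.

Local Notation tact := (tact alpha).
Local Notation gi := (@monoid.inv G).

Definition row_count (N : nat) (A : set (Y X)) (x : X) : nat :=
  count (fun q => `[< A (x, q) >]) (iota 0 N).

Lemma row_count_le N A x : (row_count N A x <= N)%N.
Proof. by rewrite /row_count (leq_trans (count_size _ _)) // size_iota. Qed.

Lemma row_count_widen (A : set (Y X)) N N' x : bounded_by N A -> (N <= N')%N ->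
  row_count N' A x = row_count N A x.
Proof.
move=> hA NN'; rewrite /row_count -(subnKC NN') iotaD count_cat add0n.
rewrite (@eq_in_count _ _ pred0 (iota N (N' - N))) ?count_pred0 ?addn0 //.
by move=> q; rewrite mem_iota => /andP [Nq _]; apply: asboolF => /hA; lia.
Qed.

Lemma row_count_setU N (A C : set (Y X)) x : A `&` C = set0 ->
  row_count N (A `|` C) x = (row_count N A x + row_count N C x)%N.
Proof.
move=> dAC; rewrite /row_count -count_predUI.
rewrite (@eq_count _ (predI _ _) pred0) ?count_pred0 ?addn0.
  by apply: eq_count => q /=; rewrite asbool_or.
move=> q /=; apply/negbTE/nandP; case: (pselect (A (x, q))) => Axq; last first.
  by left; apply/negP => /asboolP.
right; apply/negP => /asboolP Cxq.
by have : (A `&` C) (x, q) by []; rewrite dAC.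
Qed.

Lemma row_count0 N x : row_count N set0 x = 0%N.
Proof.
by rewrite /row_count (@eq_count _ _ pred0) ?count_pred0 // => q; exact: asboolF.
Qed.

Lemma row_count_bigcup N n (P : nat -> set (Y X)) x : trivIset `I_n P ->
  row_count N (\bigcup_(i in `I_n) P i) x = (\sum_(i < n) row_count N (P i) x)%N.
Proof.
elim: n => [|n IH] tP; first by rewrite bigcup_mkord !big_ord0 row_count0.
rewrite big_ord_recr /= -IH; last by move=> i j /= hi hj; apply: tP => /=; lia.
rewrite -row_count_setU; first by rewrite !bigcup_mkord big_ord_recr.
apply/seteqP; split => // y [[i /= hi Pi] Pn].
have : i = n by apply: tP => //=; [lia|exists y].
lia.
Qed.

Lemma row_count_image N g s (P : set (Y X)) x : bijective s ->
  bounded_by N P -> bounded_by N (tact g s @` P) ->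
  row_count N (tact g s @` P) x = row_count N P (alpha (gi g) x).
Proof.
move=> [s' ss' s's] hP hI; set y := alpha (gi g) x.
have e q : `[< (tact g s @` P) (x, q) >] = `[< P (y, s' q) >].
  by rewrite (image_tactE _ _ _ ss' s's).
rewrite /row_count (eq_count e) -!size_filter -(size_map s'); apply: perm_size.
apply: uniq_perm.
- rewrite map_inj_uniq; first by rewrite filter_uniq // iota_uniq.
  exact: can_inj s's.
- by rewrite filter_uniq // iota_uniq.
move=> n; apply/mapP/idP.
  move=> [q]; rewrite mem_filter mem_iota => /andP [/asboolP Pq _] ->.
  rewrite mem_filter mem_iota; apply/andP; split; first exact/asboolP.
  by have := hP _ _ Pq; lia.
rewrite mem_filter mem_iota => /andP [/asboolP Pn _].
exists (s n); last by rewrite ss'.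
rewrite mem_filter mem_iota ss'; apply/andP; split; first exact/asboolP.
have : (tact g s @` P) (x, s n) by exists (y, n) => //; rewrite /tact /= /y actVK.
by move/hI; lia.
Qed.

End RowCount.

Section OrbitDensity.
Variables (G : groupType) (X : topologicalType) (alpha : G -> X -> X).
Hypothesis hact : is_action alpha.
Variable x0 : X.
Variable U : set_system (seq G).
Hypotheses (UU : UltraFilter U) (UF : forall K e, (0 < e)%R -> U (folner K e)).

Local Notation tact := (tact alpha).
Local Notation equidec := (equidec alpha).
Local Notation gm := (@monoid.mul G).
Local Notation gi := (@monoid.inv G).

Local Open Scope ring_scope.

Definition orbit_avg (N : nat) (A : set (Y X)) (F : seq G) : R :=
  (\sum_(h <- F) row_count N A (alpha h x0))%:R / (size F)%:R.

Lemma orbit_avg_ge0 N A F : 0 <= orbit_avg N A F.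
Proof. by rewrite /orbit_avg divr_ge0 // ler0n. Qed.

Lemma orbit_avg_le N A F : orbit_avg N A F <= N%:R.
Proof.
rewrite /orbit_avg; case: (posnP (size F)) => hF; first by rewrite hF invr0 mulr0 ler0n.
rewrite ler_pdivrMr ?ltr0n // -natrM ler_nat.
have := @sum_le_count _ F predT (fun h => row_count N A (alpha h x0)) N
  (fun h => row_count_le N A (alpha h x0)).
by rewrite count_predT.
Qed.

Lemma orbit_avg_setU N (A C : set (Y X)) F : A `&` C = set0 ->
  orbit_avg N (A `|` C) F = orbit_avg N A F + orbit_avg N C F.
Proof.
move=> dAC; rewrite /orbit_avg -mulrDl -natrD -big_split /=; congr (_%:R / _).
by apply: eq_bigr => h _; rewrite row_count_setU.
Qed.

Lemma orbit_avg_bigcup N n (A : set (Y X)) (P : nat -> set (Y X)) F :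
  A = \bigcup_(i in `I_n) P i -> trivIset `I_n P ->
  orbit_avg N A F = \sum_(i < n) orbit_avg N (P i) F.
Proof.
move=> -> tP; rewrite /orbit_avg -mulr_suml -natr_sum; congr (_%:R / _).
by under eq_bigr do rewrite row_count_bigcup //; rewrite exchange_big.
Qed.

Definition row_bound (A : set (Y X)) : nat := xget 0%N [set N | bounded_by N A].

Definition density (A : set (Y X)) : R := lim (orbit_avg (row_bound A) A @ U).

Lemma orbit_avg_row_bound (A : set (Y X)) N : bounded_by N A ->
  orbit_avg (row_bound A) A = orbit_avg N A.
Proof.
move=> hN; have hb : bounded_by (row_bound A) A.
  exact: (@xgetI _ 0%N [set N | bounded_by N A] N hN).
apply/funext => F; rewrite /orbit_avg; congr (_%:R / _); apply: eq_bigr => h _.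
rewrite -(row_count_widen _ hb (leq_maxr N (row_bound A))).
by rewrite (row_count_widen _ hN (leq_maxl N _)).
Qed.

Lemma density_cvg (A : set (Y X)) N : bounded_by N A ->
  orbit_avg N A @ U --> density A.
Proof.
move=> hN; rewrite /density (orbit_avg_row_bound hN).
by apply: (@ultra_cvg_bounded _ _ _ N%:R) => // t; rewrite orbit_avg_ge0 orbit_avg_le.
Qed.

Lemma density_eq (A : set (Y X)) N l : bounded_by N A ->
  orbit_avg N A @ U --> l -> density A = l.
Proof.
by move=> hN h; rewrite /density (orbit_avg_row_bound hN) (cvg_lim (@Rhausdorff R) h).
Qed.

Lemma density_cst (A : set (Y X)) N c : bounded_by N A ->
  U [set F | orbit_avg N A F = c] -> density A = c.
Proof.
move=> hN hU; apply: (density_eq hN); apply: cvg_near_cst.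
exact: filterS hU.
Qed.

Lemma density_ge0 (A : set (Y X)) : bounded A -> 0 <= density A.
Proof.
move=> [N hN]; have := density_cvg hN => h.
rewrite -(cvg_lim (@Rhausdorff R) h); apply: limr_ge.
  by apply/cvg_ex; exists (density A).
by apply: filterS (@filterT _ U _) => F _; exact: orbit_avg_ge0.
Qed.

Lemma density_setU (A C : set (Y X)) : bounded A -> bounded C -> A `&` C = set0 ->
  density (A `|` C) = density A + density C.
Proof.
move=> [N1 h1] [N2 h2] dAC.
have hA := bounded_byW (leq_addr N2 N1) h1.
have hC := bounded_byW (leq_addl N1 N2) h2.
have hAC : bounded_by (N1 + N2) (A `|` C) by move=> x n [/hA|/hC].
apply: (density_eq hAC).
have -> : orbit_avg (N1 + N2) (A `|` C) =
    orbit_avg (N1 + N2) A + orbit_avg (N1 + N2) C.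
  by apply/funext => F; rewrite orbit_avg_setU.
exact: (@cvgD _ R^o _ _ _ _ _ _ _ (density_cvg hA) (density_cvg hC)).
Qed.

Lemma density_first_row : density (@first_row X) = 1.
Proof.
apply: (@density_cst _ 1%N); first by move=> x n; rewrite /first_row /= => ->.
apply: filterS (UF [::] ltr01) => F [_ hF _] /=.
rewrite /orbit_avg (eq_bigr (fun _ => 1%N)); last first.
  by move=> h _; rewrite /row_count /= /first_row /= asboolT.
by rewrite sum1_size divff // pnatr_eq0 -lt0n.
Qed.

Lemma density_miss (B : set (Y X)) : bounded B ->
  (forall h n, ~ B (alpha h x0, n)) -> density B = 0.
Proof.
move=> [N hN] miss; apply: (@density_cst _ N) => //.
apply: filterS (@filterT _ U _) => F _ /=.
rewrite /orbit_avg big1 ?mul0r // => h _.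
by rewrite /row_count (@eq_count _ _ pred0) ?count_pred0 // => q; exact: asboolF.
Qed.

Lemma orbit_avg_image_dev N g s (P : set (Y X)) F e : bijective s ->
  bounded_by N P -> bounded_by N (tact g s @` P) ->
  uniq F -> (0 < size F)%N ->
  (symdiff_card (left_translate (gi g) F) F)%:R < e * (size F)%:R ->
  `|orbit_avg N (tact g s @` P) F - orbit_avg N P F| <= N%:R * e.
Proof.
move=> bs hP hI uF sF hsd; rewrite /orbit_avg.
have -> : (\sum_(h <- F) row_count N (tact g s @` P) (alpha h x0) =
    \sum_(h <- map (gm (gi g)) F) row_count N P (alpha h x0))%N.
  rewrite big_map; apply: eq_bigr => h _.
  by rewrite (row_count_image hact _ bs hP hI) actM.
rewrite -mulrBl normrM normfV normr_nat ler_pdivrMr ?ltr0n //.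
apply: (le_trans (@sum_translate_symdiff G (fun h => row_count N P (alpha h x0))
  N (gi g) F uF (fun h => row_count_le N P (alpha h x0)))).
by rewrite -mulrA ler_wpM2l ?ler0n //; exact: ltW.
Qed.

Lemma orbit_avg_equidec_near (A B : set (Y X)) N : equidec A B ->
  bounded_by N A -> bounded_by N B ->
  forall e, 0 < e -> U [set F | `|orbit_avg N B F - orbit_avg N A F| < e].
Proof.
move=> [n [P [g [s [hP AP tP BP tPi]]]]] hA hB e e0.
have hPi i : (i < n)%N -> bounded_by N (P i).
  by move=> hi x q Pq; apply: (hA x); rewrite AP; exists i.
have hIi i : (i < n)%N -> bounded_by N (tact (g i) (s i) @` P i).
  by move=> hi x q Iq; apply: (hB x); rewrite BP; exists i.
pose D : R := (n * N).+1%:R; have D0 : 0 < D by rewrite ltr0n.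
pose e' := e / D; have e'0 : 0 < e' by rewrite divr_gt0.
apply: filterS (UF [seq gi (g i) | i <- iota 0 n] e'0) => F [uF sF hK] /=.
rewrite (orbit_avg_bigcup _ _ BP tPi) (orbit_avg_bigcup _ _ AP tP) -sumrB.
apply: le_lt_trans (ler_norm_sum _ _ _) _.
apply: (@le_lt_trans _ _ (\sum_(i < n) N%:R * e')).
  apply: ler_sum => i _; apply: orbit_avg_image_dev => //.
  - exact: (hP i (ltn_ord i)).2.
  - exact: hPi.
  - exact: hIi.
  - by apply: hK; apply/mapP; exists (val i); rewrite // mem_iota leq0n add0n ltn_ord.
have eE : e = e' * D by rewrite /e' divfK // gt_eqF.
have nND : N%:R * n%:R < D by rewrite /D -natrM ltr_nat; lia.
have N0 : 0 <= N%:R :> R by rewrite ler0n.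
have n0 : 0 <= n%:R :> R by rewrite ler0n.
rewrite sumr_const card_ord -mulr_natr [X in _ < X]eE; nra.
Qed.

Lemma density_equidec (A B : set (Y X)) : equidec A B ->
  bounded A -> bounded B -> density A = density B.
Proof.
move=> AB [N1 h1] [N2 h2].
have hA := bounded_byW (leq_addr N2 N1) h1; have hB := bounded_byW (leq_addl N1 N2) h2.
apply/esym/(cvg_eq_near _ (density_cvg hB) (density_cvg hA)).
exact: orbit_avg_equidec_near.
Qed.

Lemma density_clsE (A : set (Y X)) : bclopen A ->
  density (xget set0 (cls alpha A)) = density A.
Proof.
move=> bA; have [bA' AA'] := @xgetI _ set0 (cls alpha A) A (cls_self hact bA).
exact/esym/(density_equidec AA' bA.2 bA'.2).
Qed.

Lemma Mstate_density : Mstate alpha (fun a => (density (xget set0 a))%:E).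
Proof.
split; last by rewrite (density_clsE (@bclopen_first_row X)) density_first_row.
split.
- by move=> a [A [bA ->]]; rewrite density_clsE // lee_fin; exact: density_ge0 bA.2.
- by rewrite (density_clsE (bclopen0 X)) (density_miss (bclopen0 X).2 (fun _ _ => id)).
- move=> a c ha hc.
  have [A [C [bA bC dAC [-> -> ->]]]] := tadd_representatives hact ha hc.
  rewrite (density_clsE (bclopenU bA bC)) (density_clsE bA) (density_clsE bC).
  by rewrite (density_setU bA.2 bC.2 dAC).
Qed.

End OrbitDensity.

Lemma compact_cover_or_miss (T : topologicalType) (I : Type) (i0 : I)
    (V : I -> set T) : compact [set: T] -> (forall i, open (V i)) ->
  (exists l : seq I, forall x, exists2 k, (k < size l)%N & V (nth i0 l k) x) \/
  (exists x, forall i, ~ V i x).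
Proof.
move=> cpt oV; case: (pselect (exists l : seq I,
  forall x, exists2 k, (k < size l)%N & V (nth i0 l k) x)) => [|nocover]; first by left.
right; pose miss (l : seq I) :=
  [set x | forall k, (k < size l)%N -> ~ V (nth i0 l k) x].
have FF : Filter (filter_from setT miss).
  apply: filter_fromT_filter; first by exists [::].
  move=> l1 l2; exists (l1 ++ l2) => x mx; split => k hk.
    by have := mx k; rewrite size_cat nth_cat hk; apply; lia.
  have := mx (size l1 + k)%N; rewrite size_cat nth_cat ifN ?addKn; last lia.
  by apply; lia.
have PF : ProperFilter (filter_from setT miss).
  apply: filter_from_proper => l _; apply: contrapT => nomiss.
  apply: nocover; exists l => x; apply: contrapT => nx.
  by apply: nomiss; exists x => k hk Vk; apply: nx; exists k.
have [p [_ cp]] := cpt _ PF filterT.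
exists p => i Vip; have : nbhs p (V i) by move: (oV i); rewrite openE; apply.
have missi : filter_from setT miss (miss [:: i]) by exists [:: i].
by move=> /(cp _ _ missi) [x [/(_ 0%N isT)]].
Qed.

Theorem lemmal (G : groupType) (X : topologicalType) (alpha : G -> X -> X)
  (hcount : countable_group G) (hamen : amenable_group G)
  (hcpt : compact [set: X]) (hT2 : hausdorff_space X) (h0 : clopen_base X)
  (hact : is_action alpha) (b : set (set (Y X))) (hb : inT alpha b) :
  order_unit alpha b <-> (forall mu, Mstate alpha mu -> (0 < mu b)%E).
Proof.
split => [ou mu hmu|]; first exact: order_unit_Mstate_gt0 hb ou hmu.
case: hb => B [bB ->] hmu; have [N hN] := bB.2.
have [[l cover]|[x0 miss]] :=
  compact_cover_or_miss monoid.one hcpt (fun g => open_translate_hits hact g bB.1.1).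
  exact (order_unit_of_cover hact bB hN cover).
have [U [UU UF]] := folner_ultrafilter hamen.
have := hmu _ (Mstate_density hact x0 UU UF).
rewrite (density_clsE hact x0 UU UF bB) (density_miss UU bB.2) ?ltxx //.
by move=> h n Bn; apply: (miss h); exists n.
Qed.
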